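(* Let $A$ be a DFA over a finite alphabet $\Sigma$ and let $S=s_1,\ldots,s_l$ be any non-empty sequence of strings $s_i\in\Sigma^*$. Any execution of prefix-free IDS on $S$ (with teacher $A$) terminates, with the program variable $k$ having value $l$.
   Context: Let $A=\langle\Sigma,Q,F,q_0,\delta\rangle$ be a DFA with language $L(A)$; $\lambda$ is the empty string; membership queries to $A$ are answered correctly. Let $d_0$ be a fresh symbol not in $\Sigma^*$; $f(d_0,b)=d_0$, $f(\alpha,b)=\alpha b$ for $\alpha\in\Sigma^*$; $U\oplus V=(U-V)\cup(V-U)$. Refinement procedure (w.r.t. $P'_k$, $T_k$): while there exist $\alpha,\beta\in P'_k$, $b\in\Sigma$ with $E_i(\alpha)=E_i(\beta)$ but $E_i(f(\alpha,b))\neq E_i(f(\beta,b))$: choose (nondeterministically) such $\alpha,\beta,b$ and $\gamma\in E_i(f(\alpha,b))\oplus E_i(f(\beta,b))$, set $v_{i+1}=b\gamma$, increase $i$, and for each $\alpha'\in T_k$ set $E_i(\alpha')=E_{i-1}(\alpha')\cup\{v_i\}$ if $\alpha'v_i\in L(A)$, else $E_i(\alpha')=E_{i-1}(\alpha')$; always $E_i(d_0)=\emptyset$. Construction procedure: states $E_i(\alpha)$, $\alpha\in T_k$; initial state $E_i(\lambda)$; accepting states those containing $\lambda$; for $\alpha\in P'_k$: if $E_i(\alpha)=\emptyset$ add self-loops for all $b$, else $\delta(E_i(\alpha),b)=E_i(f(\alpha,b))$; for $\beta\in T_k-P'_k$ with $E_i(\beta)\neq E_i(\alpha)$ for all $\alpha\in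 P'_k$ and $E_i(\beta)\ne\emptyset$, $\delta(E_i(\beta),b)=\emptyset$ for all $b$. Prefix-free IDS on $S$: initialize $i=k=t=0$, $v_0=\lambda$, $P_0=\{\lambda\}$, $P'_0=P_0\cup\{d_0\}$, $T_0=\{\lambda\}\cup\Sigma$, $E_0(\alpha)=\{\lambda\}$ if $\alpha\in L(A)$ else $\emptyset$ ($\alpha\in T_0$); refine; construct $M_0$. While $S$ is non-empty: read the next string $\alpha$ (removing it from $S$); increase $k,t$ by one; $P_k=P_{k-1}\cup\{\alpha\}$, $P'_k=P_k\cup\{d_0\}$, $T_k=T_{k-1}\cup\{\alpha\}\cup\{\alpha b:b\in\Sigma\}$; for $\beta\in T_k-T_{k-1}$ set $E_i(\beta)=\{v_j:0\le j\le i,\beta v_j\in L(A)\}$; refine; set $M_t=M_{t-1}$ if $M_{t-1}$ accepts $\alpha$ iff $\alpha\in L(A)$, else construct $M_t$. *)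

(* Model of "prefix-free IDS" as a nondeterministic
   small-step transition system. *)
From mathcomp Require Import all_boot.
Set Implicit Arguments. Unset Strict Implicit. Unset Printing Implicit Defensive.

Record dfa (Sigma : finType) := DFA {
  dstate : finType;
  dinit : dstate;
  dtrans : dstate -> Sigma -> dstate;
  dfinal : {set dstate} }.
Arguments dinit {Sigma} d.
Arguments dtrans {Sigma} d _ _.
Arguments dfinal {Sigma} d.

Definition word (Sigma : finType) := seq Sigma.

(* membership in L(A) (membership queries are answered correctly) *)
Definition inL (Sigma : finType) (A : dfa Sigma) (w : word Sigma) : bool :=
  foldl (dtrans A) (dinit A) w \in dfinal A.

(* strings extended by the fresh symbol d_0, encoded as None *)
Definition dword (Sigma : finType) := option (word Sigma).

Definition fext (Sigma : finType) (x : dword Sigma) (b : Sigma) : dword Sigma :=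
  match x with None => None | Some a => Some (rcons a b) end.

(* control points of the algorithm: inside the refinement loop, at the head
   of the main "while S is non-empty" loop, or terminated *)
Inductive phase := Refine | Head | Done.

Record config (Sigma : finType) := Config {
  pc : phase;
  ci : nat;
  ck : nat;
  ct : nat;
  cv : seq (word Sigma);
  cP : seq (word Sigma);
  cT : seq (word Sigma);
  cE : dword Sigma -> seq (word Sigma);    (* E_i, sets as lists *)
  crest : seq (word Sigma) }.              (* unread part of S *)

(* membership in P'_k = P_k u {d_0} *)
Definition inP' (Sigma : finType) (c : config Sigma) (x : dword Sigma) : bool :=
  if x is Some a then a \in cP c else true.

(* the refinement loop condition, together with the choice of gamma:
   alpha, beta in P'_k, E(alpha) = E(beta), E(f(alpha,b)) <> E(f(beta,b)),
   gamma in E(f(alpha,b)) (+) E(f(beta,b)) *)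
Definition refine_choice (Sigma : finType) (c : config Sigma)
  (al be : dword Sigma) (b : Sigma) (g : word Sigma) : Prop :=
  [/\ inP' c al, inP' c be, cE c al =i cE c be,
      ~ (cE c (fext al b) =i cE c (fext be b)) &
      (g \in cE c (fext al b)) != (g \in cE c (fext be b))].

Definition E_add (Sigma : finType) (A : dfa Sigma) (c : config Sigma)
  (w : word Sigma) (x : dword Sigma) : seq (word Sigma) :=
  match x with
  | None => [::]
  | Some a => if (a \in cT c) && inL A (a ++ w) then w :: cE c x else cE c x
  end.

Definition E_new (Sigma : finType) (A : dfa Sigma) (c : config Sigma)
  (Tnew : seq (word Sigma)) (x : dword Sigma) : seq (word Sigma) :=
  match x with
  | Some be => if (be \in Tnew) && (be \notin cT c)
               then [seq v <- cv c | inL A (be ++ v)] else cE c x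
  | None => cE c x
  end.

Definition ids_init (Sigma : finType) (A : dfa Sigma) (S : seq (word Sigma))
  : config Sigma :=
  {| pc := Refine; ci := 0; ck := 0; ct := 0;
     cv := [:: [::]]; cP := [:: [::]];
     cT := [::] :: [seq [:: b] | b <- enum Sigma];
     cE := fun x => match x with
                    | None => [::]
                    | Some a => if inL A a then [:: [::]] else [::] end;
     crest := S |}.

(* The construction of M_t (and the test whether
   M_{t-1} classifies alpha correctly) does not affect control flow or the
   program variables i,k,t,v,P,T,E, so it is not modelled. *)
Inductive ids_step (Sigma : finType) (A : dfa Sigma) :
    config Sigma -> config Sigma -> Prop :=
| StepRefine c al be b g :
    pc c = Refine -> refine_choice c al be b g ->
    ids_step A c
      {| pc := Refine; ci := (ci c).+1; ck := ck c; ct := ct c;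
         cv := rcons (cv c) (b :: g); cP := cP c; cT := cT c;
         cE := E_add A c (b :: g); crest := crest c |}
| StepRefineExit c :
    pc c = Refine -> ~ (exists al be b g, refine_choice c al be b g) ->
    ids_step A c
      {| pc := Head; ci := ci c; ck := ck c; ct := ct c;
         cv := cv c; cP := cP c; cT := cT c; cE := cE c; crest := crest c |}
| StepStop c :
    pc c = Head -> crest c = [::] ->
    ids_step A c
      {| pc := Done; ci := ci c; ck := ck c; ct := ct c;
         cv := cv c; cP := cP c; cT := cT c; cE := cE c; crest := crest c |}
| StepRead c a r :
    pc c = Head -> crest c = a :: r ->
    let Tn := cT c ++ a :: [seq rcons a b | b <- enum Sigma] in
    ids_step A c
      {| pc := Refine; ci := ci c; ck := (ck c).+1; ct := (ct c).+1;
         cv := cv c; cP := rcons (cP c) a; cT := Tn;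
         cE := E_new A c Tn; crest := r |}.

Inductive reachable (Sigma : finType) (A : dfa Sigma) (c0 : config Sigma)
  : config Sigma -> Prop :=
| reach0 : reachable A c0 c0
| reachS c c' : reachable A c0 c -> ids_step A c c' -> reachable A c0 c'.

From mathcomp Require Import all_boot zify.
From Stdlib Require Import Classical_Prop.
Set Implicit Arguments. Unset Strict Implicit. Unset Printing Implicit Defensive.

(* The table E_i is always determined by the DFA: for every alpha in T_k,
   E_i(alpha) is the set of experiments v_j accepted from the state reached by
   alpha, and d_0 behaves as a state accepting nothing.  Hence a refinement
   step, which adds an experiment b gamma splitting two rows alpha, beta that
   agree on all earlier experiments, strictly enlarges the set of pairs of
   (optional) states separated by some experiment.  That set is bounded by
   the square of |Q| + 1, so every refinement loop ends, and every pass of the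
   main loop consumes one string of S. *)

Lemma Acc_measure (T : Type) (R : T -> T -> Prop) (P : T -> Prop) (f : T -> nat) :
  (forall x y, R y x -> P x -> P y /\ f y < f x) ->
  forall x, P x -> Acc R x.
Proof.
move=> Rdec x; move: {2}(f x) (leqnn (f x)) => n; elim: n x => [|n IHn] x fx Px.
- by constructor=> y /Rdec /(_ Px) [_]; rewrite ltnNge (leq_trans fx).
- constructor=> y /Rdec /(_ Px) [Py fyx]; apply: IHn Py.
  by rewrite -ltnS (leq_trans fyx).
Qed.

Section PrefixFreeIDS.
Variables (Sigma : finType) (A : dfa Sigma).
Local Notation Q := (dstate A).

Definition state_of (x : dword Sigma) : option Q :=
  omap (foldl (dtrans A) (dinit A)) x.

Definition accepts_from (o : option Q) (v : word Sigma) : bool :=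
  if o is Some q then foldl (dtrans A) q v \in dfinal A else false.

Definition inT' (c : config Sigma) (x : dword Sigma) : bool :=
  if x is Some a then a \in cT c else true.

Definition experiments_of (c : config Sigma) (x : dword Sigma) :=
  [seq v <- cv c | accepts_from (state_of x) v].

Definition E_sound (c : config Sigma) : Prop :=
  forall x, inT' c x -> cE c x =i experiments_of c x.

Definition P_closed (c : config Sigma) : Prop :=
  forall a, a \in cP c -> a \in cT c /\ forall b, rcons a b \in cT c.

Lemma inL_cat a v :
  inL A (a ++ v) = accepts_from (state_of (Some a)) v.
Proof. by rewrite /inL foldl_cat. Qed.

Lemma accepts_from_cons x b g :
  accepts_from (state_of x) (b :: g) = accepts_from (state_of (fext x b)) g.
Proof. by case: x => [a|] //=; rewrite foldl_rcons. Qed.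

Lemma experiments_of_None c : experiments_of c None = [::].
Proof. by rewrite /experiments_of; elim: (cv c). Qed.

Lemma P_closed_inT' c x b :
  P_closed c -> inP' c x -> inT' c x /\ inT' c (fext x b).
Proof. by move=> PT; case: x => [a /PT [Ta /(_ b)]|]. Qed.

Definition ids_inv (S : seq (word Sigma)) (c : config Sigma) : Prop :=
  [/\ ck c + size (crest c) = size S, pc c = Done -> crest c = [::],
      P_closed c & E_sound c].

Lemma ids_inv_init S : ids_inv S (ids_init A S).
Proof.
split=> //=.
- move=> a; rewrite inE => /eqP ->; split=> [|b]; first exact: mem_head.
  by rewrite inE map_f ?mem_enum ?orbT.
- by case=> [a|] _ v //=; rewrite /experiments_of /= inL_cat; case: ifP.
Qed.

Lemma E_sound_refine c b g :
  E_sound c -> E_sound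
    {| pc := Refine; ci := (ci c).+1; ck := ck c; ct := ct c;
       cv := rcons (cv c) (b :: g); cP := cP c; cT := cT c;
       cE := E_add A c (b :: g); crest := crest c |}.
Proof.
move=> HE [a|] /= Ha v; last by rewrite experiments_of_None.
rewrite Ha andTb inL_cat /experiments_of filter_rcons.
by case: ifP => _; rewrite ?mem_rcons ?inE (HE (Some a) Ha).
Qed.

Lemma E_sound_read c a r :
  E_sound c ->
  let Tn := cT c ++ a :: [seq rcons a b | b <- enum Sigma] in
  E_sound
    {| pc := Refine; ci := ci c; ck := (ck c).+1; ct := (ct c).+1;
       cv := cv c; cP := rcons (cP c) a; cT := Tn;
       cE := E_new A c Tn; crest := r |}.
Proof.
move=> HE Tn [a0|] /= Ha v; last by rewrite HE.
case: (boolP (a0 \in cT c)) => old; first by rewrite andbF (HE (Some a0)).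
by rewrite Ha /experiments_of /= (eq_filter (inL_cat a0)).
Qed.

Lemma ids_inv_step S c c' : ids_step A c c' -> ids_inv S c -> ids_inv S c'.
Proof.
case=> {c c'} [c al be b g _ _|c _ _|c _ Hr|c a r _ Hr Tn] [Hk HD PT HE];
  split=> //=.
- exact: E_sound_refine.
- by move: Hk; rewrite Hr /=; lia.
- move=> a0; rewrite mem_rcons inE => /orP[/eqP ->|/PT [Ha0 Hb]].
  + split=> [|b]; rewrite mem_cat inE ?eqxx ?orbT //.
    by rewrite map_f ?mem_enum ?orbT.
  + by split=> [|b]; rewrite mem_cat ?Ha0 ?Hb.
- exact: E_sound_read.
Qed.

Definition separated (vs : seq (word Sigma)) : {set option Q * option Q} :=
  [set p | has (fun v => accepts_from p.1 v != accepts_from p.2 v) vs].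

Lemma separated_refine c al be b g :
  P_closed c -> E_sound c -> refine_choice c al be b g ->
  separated (cv c) \proper separated (rcons (cv c) (b :: g)).
Proof.
move=> PT HE [Pal Pbe Eeq _ Hg].
have [Tal Tal'] := P_closed_inT' b PT Pal.
have [Tbe Tbe'] := P_closed_inT' b PT Pbe.
apply/properP; split.
  by apply/subsetP => p; rewrite !inE has_rcons => ->; rewrite orbT.
exists (state_of al, state_of be).
  rewrite inE has_rcons !accepts_from_cons /=; apply/orP; left.
  move: Hg; rewrite (HE _ Tal') (HE _ Tbe') !mem_filter.
  by apply: contra => /eqP ->.
rewrite inE; apply/hasPn => v v_in; rewrite negbK.
by move: (Eeq v); rewrite (HE _ Tal) (HE _ Tbe) !mem_filter v_in !andbT => ->.
Qed.

Definition npairs := #|{: option Q * option Q}|.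

(* Refinement steps decrease [npairs - #|separated (cv c)|]; the weight of an
   unread string exceeds what the rest of its pass of the main loop uses. *)
Definition ids_measure (c : config Sigma) : nat :=
  size (crest c) * (2 * npairs + 3) +
  match pc c with
  | Refine => npairs.+2 + (npairs - #|separated (cv c)|)
  | Head => 1
  | Done => 0
  end.

Lemma ids_measure_step S c c' :
  ids_step A c c' -> ids_inv S c -> ids_measure c' < ids_measure c.
Proof.
rewrite /ids_measure.
case=> {c c'} [c al be b g Hp Hch|c Hp _|c Hp Hr|c a r Hp Hr Tn]
  [_ _ PT HE]; rewrite /= Hp ?ltn_add2l //.
- have sep_lt := proper_card (separated_refine PT HE Hch).
  have sep_le : #|separated (rcons (cv c) (b :: g))| <= npairs := max_card _.
  by rewrite ltn_sub2l // (leq_trans sep_lt).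
- rewrite Hr /=; move: (leq_subr #|separated (cv c)| npairs).
  by move: (npairs - _) => d; lia.
Qed.

Lemma ids_progress c : pc c <> Done -> exists c', ids_step A c c'.
Proof.
case Hp: (pc c) => // _.
- have [[al [be [b [g Hch]]]]|Hno] :=
    classic (exists al be b g, refine_choice c al be b g).
  + by eexists; apply: StepRefine Hch.
  + by eexists; apply: StepRefineExit Hno.
- case Hr: (crest c) => [|a r].
  + by eexists; apply: StepStop Hr.
  + by eexists; apply: StepRead Hr.
Qed.

Lemma reachable_ids_inv S c :
  reachable A (ids_init A S) c -> ids_inv S c.
Proof.
elim=> [|c0 c1 _ IH Hs]; [exact: ids_inv_init | exact: ids_inv_step Hs IH].
Qed.

End PrefixFreeIDS.

Theorem mainTheorem4 (Sigma : finType) (A : dfa Sigma) (S : seq (word Sigma)) :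
  S != [::] ->
  Acc (fun c' c => ids_step A c c') (ids_init A S) /\
  (forall c, reachable A (ids_init A S) c ->
     (exists c', ids_step A c c') \/ (pc c = Done /\ ck c = size S)).
Proof.
move=> _; split.
  have dec c c' : ids_step A c c' -> ids_inv A S c ->
      ids_inv A S c' /\ ids_measure A c' < ids_measure A c.
    move=> step Hc.
    by split; [apply: ids_inv_step step Hc | apply: ids_measure_step step Hc].
  exact: Acc_measure dec _ (ids_inv_init A S).
move=> c /reachable_ids_inv [Hk HD _ _].
case Hp: (pc c); last by right; split=> //; move: Hk; rewrite HD //= addn0.
all: by left; apply: ids_progress; rewrite Hp.
Qed.
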